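(* Let a product two-action game with $m$ players, with data $\underline v$ and $a^i_j$ as in the context, be given. For $\pi\in S_m$ put $$EC(\pi):=\{\underline\gamma\in[0,1]^m \mid L(\underline\gamma)=F(\pi),\ \gamma^j=a^{\pi(j)}_j \text{ for all } j\in\mathcal A\setminus F(\pi)\}.$$ Then the set of equilibrium candidates of the game equals $\bigcup_{\pi\in S_m}EC(\pi)$, and this union is disjoint. Moreover $|EC(\pi)|=2^{|F(\pi)|}$ for every $\pi\in S_m$, and the total number of equilibrium candidates is $$\sum_{l=0}^m\binom{m}{l}2^l\cdot !(m-l)=V(m).$$
   Context: Fix an integer $m\ge 1$ and $\mathcal A=\{1,\dots,m\}$. A two-action game is a finite game in normal form with player set $\mathcal A$ in which each player $i$ has exactly two pure strategies $s^i_0,s^i_1$, together with utility functions $U^i:S\to\mathbb R$, where $S=\prod_{i\in\mathcal A}\{s^i_0,s^i_1\}$. A mixed strategy combination is identified with $\underline\gamma=(\gamma^1,\dots,\gamma^m)\in[0,1]^m$, where $\gamma^i$ is the probability with which player $i$ plays $s^i_1$. The expected utility $V^i$ is the multilinear extension $V^i(\underline\gamma)=\sum_{(j_1,\dots,j_m)\in\{0,1\}^m}\prod_{k=1}^m p_k(j_k)\,U^i(s^1_{j_1},\dots,s^m_{j_m})$ with $p_k(1)=\gamma^k$, $p_k(0)=1-\gamma^k$. Write $\underline\gamma^{-i}=(\gamma^j)_{j\ne i}$ and $\lambda^i(\underline\gamma^{-i}):=V^i(\underline\gamma)|_{\gamma^i=1}-V^i(\underline\gamma)|_{\gamma^i=0}$,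 a polynomial in $\underline\gamma^{-i}$. A Nash equilibrium is a point $\underline\gamma\in[0,1]^m$ such that for every $i$: $\lambda^i(\underline\gamma^{-i})=0$ if $0<\gamma^i<1$; $\lambda^i(\underline\gamma^{-i})\le 0$ if $\gamma^i=0$; $\lambda^i(\underline\gamma^{-i})\ge 0$ if $\gamma^i=1$. An equilibrium candidate is a point $\underline\gamma\in[0,1]^m$ with $\lambda^i(\underline\gamma^{-i})=0$ for every $i$ with $0<\gamma^i<1$. For $\underline\gamma$ put $L_0(\underline\gamma)=\{i:\gamma^i=0\}$, $L_1(\underline\gamma)=\{i:\gamma^i=1\}$, $L(\underline\gamma)=L_0(\underline\gamma)\cup L_1(\underline\gamma)$. A two-action game is a product two-action game if there exist $\underline v=(v_1,\dots,v_m)\in\{0,1\}^m$ and numbers $a^i_j\in(0,1)$ for $i,j\in\mathcal A$, $i\ne j$, with $a^{i_1}_j\neq a^{i_2}_j$ whenever $i_1\neq i_2$ and both differ from $j$, such that $\lambda^i(\underline\gamma^{-i})=(-1)^{v_i}\prod_{j\in\mathcal A\setminus\{i\}}(\gamma^j-a^i_j)$ for every $i\in\mathcal A$. For $\pi\in S_m$, $F(\pi)=\{i\in\mathcal A:\pi(i)=i\}$ is its set of fixed points. $\mathrm{Der}_m$ denotes the set of derangements (permutations without fixed points) in $S_m$, and the subfactorial $!n$ is the number of derangements of an $n$-element set ($!0=1$, $!1=0$). $V(m):=\sum_{l=0}^m\binom{m}{l}2^l\cdot!(m-l)$. *)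

From HB Require Import structures.
From mathcomp Require Import all_boot all_order all_algebra all_fingroup.
Set Implicit Arguments. Unset Strict Implicit. Unset Printing Implicit Defensive.
Import Order.TTheory GRing.Theory Num.Theory.
Local Open Scope ring_scope.

(* Players are 'I_m; a pure profile is s : {ffun 'I_m -> bool}
   (s k = true means player k plays s^k_1).  A mixed profile is
   gamma : 'I_m -> R, gamma k = probability of s^k_1. *)

Section Game.
Variables (R : realFieldType) (m : nat).

Definition exp_util (U : 'I_m -> {ffun 'I_m -> bool} -> R) (i : 'I_m)
  (g : 'I_m -> R) : R :=
  \sum_(s : {ffun 'I_m -> bool})
     (\prod_(k < m) (if s k then g k else 1 - g k)) * U i s.

Definition set_coord (g : 'I_m -> R) (i : 'I_m) (x : R) : 'I_m -> R :=
  fun k => if k == i then x else g k.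

(* lambda^i : V^i|_{gamma^i=1} - V^i|_{gamma^i=0}; it does not depend on gamma^i *)
Definition lam U (i : 'I_m) (g : 'I_m -> R) : R :=
  exp_util U i (set_coord g i 1) - exp_util U i (set_coord g i 0).

Definition in_cube (g : 'I_m -> R) : Prop := forall k, 0 <= g k <= 1.

Definition equilibrium_candidate U (g : 'I_m -> R) : Prop :=
  in_cube g /\ forall i, 0 < g i < 1 -> lam U i g = 0.

Definition Lset (g : 'I_m -> R) : {set 'I_m} :=
  [set i | (g i == 0) || (g i == 1)].

Definition fixpts (p : {perm 'I_m}) : {set 'I_m} := [set i | p i == i].

Definition product_game U (v : 'I_m -> bool) (a : 'I_m -> 'I_m -> R) : Prop :=
  [/\ (forall i j, i != j -> 0 < a i j < 1),
      (forall i1 i2 j, i1 != i2 -> i1 != j -> i2 != j -> a i1 j != a i2 j) &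
      (forall i (g : 'I_m -> R),
          lam U i g = (-1) ^+ v i * \prod_(j < m | j != i) (g j - a i j))].

Definition EC (a : 'I_m -> 'I_m -> R) (p : {perm 'I_m}) (g : 'I_m -> R) : Prop :=
  [/\ in_cube g, Lset g = fixpts p &
      forall j, j \notin fixpts p -> g j = a (p j) j].

End Game.

Definition has_card (T : eqType) (P : T -> Prop) (n : nat) : Prop :=
  exists s : seq T, [/\ uniq s, size s = n & forall x, P x <-> x \in s].

Definition subfact (n : nat) : nat :=
  #|[set p : {perm 'I_n} | [forall i, p i != i]]|.

Definition Vnum (m : nat) : nat :=
  (\sum_(l < m.+1) 'C(m, l) * 2 ^ l * subfact (m - l))%N.

From HB Require Import structures.
From mathcomp Require Import all_boot all_order all_algebra all_fingroup.
Import Order.TTheory GRing.Theory Num.Theory.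

Set Implicit Arguments.
Unset Strict Implicit.
Unset Printing Implicit Defensive.

(* A point g of the cube is a candidate iff every interior player i has some
   j <> i with g j = a i j.  The map i |-> j is injective (the a i j are distinct
   in each column j) and sends interior players to interior players (since
   0 < a i j < 1); extended by the identity it is a permutation whose inverse pi
   satisfies g j = a (pi j) j off the fixed points and whose fixed points are
   exactly the pure coordinates of g, and pi is recovered from g.  Conversely
   EC(pi) is parametrized by the subsets of F(pi) (coordinates equal to 1),
   which gives 2^|F(pi)| points; grouping the permutations by their fixed-point
   set F, of which there are !(m - |F|), gives V(m) candidates in total. *)

Definition derangements (T : finType) : {set {perm T}} :=
  [set p : {perm T} | [forall x, p x != x]].

Section PermTransport.
Variables (T T' : finType) (h : T -> T') (h' : T' -> T).
Hypotheses (hK : cancel h h') (h'K : cancel h' h).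

Lemma transport_perm_inj (q : {perm T}) : injective (h \o q \o h').
Proof. by move=> y z /(can_inj hK)/perm_inj/(can_inj h'K). Qed.

Definition transport_perm (q : {perm T}) : {perm T'} := perm (@transport_perm_inj q).

Lemma transport_perm_fixE q y : (transport_perm q y == y) = (q (h' y) == h' y).
Proof.
rewrite permE /=; apply/eqP/eqP => [qy | ->]; last exact: h'K.
by rewrite -{2}qy hK.
Qed.

Lemma transport_derangements : transport_perm @: derangements T \subset derangements T'.
Proof.
apply/subsetP => _ /imsetP[q + ->]; rewrite !inE => /forallP q_der.
by apply/forallP => y; rewrite transport_perm_fixE.
Qed.

End PermTransport.

Lemma card_derangements_transport (T T' : finType) (h : T -> T') (h' : T' -> T) :
  cancel h h' -> cancel h' h -> #|derangements T| = #|derangements T'|.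
Proof.
move=> hK h'K; apply/eqP; rewrite eqn_leq.
have le_der (A B : finType) (f : A -> B) (f' : B -> A) :
    cancel f f' -> cancel f' f -> #|derangements A| <= #|derangements B|.
  move=> fK f'K; rewrite -(card_in_imset (f := transport_perm fK f'K)).
    exact/subset_leq_card/transport_derangements.
  move=> q1 q2 _ _ /permP eq_q; apply/permP => x.
  by have := eq_q (f x); rewrite !permE /= fK => /(can_inj fK).
by rewrite (le_der _ _ _ _ hK h'K) (le_der _ _ _ _ h'K hK).
Qed.

Lemma card_derangements (T : finType) : #|derangements T| = subfact #|T|.
Proof. exact: card_derangements_transport (@enum_rankK T) (@enum_valK T). Qed.

Section PermsWithFixedSet.
Variables (T : finType) (F : {set T}).
Local Notation S := {x | x \in ~: F}.

Definition extend_perm_fun (q : {perm S}) (x : T) : T :=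
  if insub x is Some y then val (q y) else x.

Lemma extend_perm_fun_inj q : injective (extend_perm_fun q).
Proof.
rewrite /extend_perm_fun => x1 x2.
case: insubP => [y1 _ <-|x1F]; case: insubP => [y2 _ <-|x2F] //.
- by move/val_inj/perm_inj->.
- by move=> qy1; move: x2F; rewrite -qy1 (valP (q y1)).
- by move=> qy2; move: x1F; rewrite qy2 (valP (q y2)).
Qed.

Definition extend_perm (q : {perm S}) : {perm T} := perm (@extend_perm_fun_inj q).

Lemma extend_permE q (y : S) : extend_perm q (val y) = val (q y).
Proof. by rewrite permE /extend_perm_fun valK. Qed.

Lemma extend_perm_out q x : x \in F -> extend_perm q x = x.
Proof.
by move=> xF; rewrite permE /extend_perm_fun; case: insubP => // y; rewrite inE xF.
Qed.

Lemma extend_perm_inj : injective extend_perm.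
Proof.
move=> q1 q2 /permP eq_q; apply/permP => y.
by apply: val_inj; rewrite -!extend_permE eq_q.
Qed.

Lemma perm_with_fixed_set_closed (p : {perm T}) x :
  [set x | p x == x] = F -> x \in ~: F -> p x \in ~: F.
Proof.
move=> fixF; rewrite -fixF !inE; apply: contra => /eqP/perm_inj ppx.
by rewrite ppx.
Qed.

Lemma card_perm_fixed_set :
  #|[set p : {perm T} | [set x | p x == x] == F]| = #|derangements S|.
Proof.
rewrite -(card_imset _ extend_perm_inj); apply: eq_card => p; symmetry.
apply/imsetP/idP => [[q] | ].
  rewrite !inE => /forallP q_der ->; apply/eqP/setP => x; rewrite inE.
  case: (boolP (x \in F)) => [xF | xF']; first by rewrite extend_perm_out ?eqxx.
  have xS : x \in ~: F by rewrite inE.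
  rewrite -[x]/(val (exist _ x xS)) extend_permE.
  by apply/negbTE; apply: contra (q_der (exist _ x xS)) => /eqP/val_inj->.
rewrite inE => /eqP fixF.
have qS_inj :
    injective (fun y : S => exist _ (p (val y)) (perm_with_fixed_set_closed fixF (valP y)) : S).
  by move=> y1 y2 [] /perm_inj/val_inj.
exists (perm qS_inj).
  rewrite inE; apply/forallP => y; rewrite permE -val_eqE /=; apply/negP => /eqP pyy.
  have yF : val y \in [set x | p x == x] by rewrite inE pyy.
  by move: (valP y); rewrite fixF in yF; rewrite inE yF.
apply/permP => x; case: (boolP (x \in F)) => [xF | xF'].
  by rewrite extend_perm_out //; move: xF; rewrite -fixF inE => /eqP.
have xS : x \in ~: F by rewrite inE.
by rewrite -[x]/(val (exist _ x xS)) extend_permE permE.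
Qed.

End PermsWithFixedSet.

Lemma card_perm_fixpts (m : nat) (F : {set 'I_m}) :
  #|[set p : {perm 'I_m} | fixpts p == F]| = subfact (m - #|F|).
Proof.
rewrite card_perm_fixed_set card_derangements card_sig.
have <- : #|~: F| = (m - #|F|)%N by rewrite cardsCs card_ord setCK.
by apply: eq_card => x; rewrite !inE.
Qed.

Lemma sum_exp2_card_fixpts (m : nat) :
  (\sum_(p : {perm 'I_m}) 2 ^ #|fixpts p|)%N = Vnum m.
Proof.
rewrite (partition_big (@fixpts m) predT) //=.
under eq_bigr => F _.
  rewrite (eq_bigr (fun=> 2 ^ #|F|)%N) => [|p /eqP-> //].
  rewrite sum_nat_const -[X in (X * _)%N]cardsE card_perm_fixpts mulnC.
  over.
rewrite (partition_big (fun F : {set 'I_m} => inord #|F| : 'I_m.+1) predT) //=.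
apply: eq_bigr => l _.
have card_F (F : {set 'I_m}) : ((inord #|F| : 'I_m.+1) == l) = (#|F| == l).
  by rewrite -val_eqE /= inordK // ltnS -[leqRHS](card_ord m) max_card.
under eq_bigl => F do rewrite card_F.
rewrite (eq_bigr (fun=> 2 ^ l * subfact (m - l)))%N => [|F /eqP-> //].
by rewrite sum_nat_const mulnA -[X in 'C(X, _)](card_ord m) -card_draws cardsE.
Qed.

Lemma has_card_image (T : eqType) (P : T -> Prop) (I : finType) (A : {set I})
    (f : I -> T) :
  {in A &, injective f} -> (forall x, P x <-> exists2 i, i \in A & x = f i) ->
  has_card P #|A|.
Proof.
move=> f_inj PE; exists [seq f i | i <- enum A]; split.
- by rewrite map_inj_in_uniq ?enum_uniq // => i j; rewrite !mem_enum; apply: f_inj.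
- by rewrite size_map cardE.
- move=> x; split => [/PE[i iA ->] | /mapP[i]].
    by apply: map_f; rewrite mem_enum.
  by rewrite mem_enum => iA ->; apply/PE; exists i.
Qed.

Lemma card_subsets_fixpts (m : nat) :
  #|[set pD : {perm 'I_m} * {set 'I_m} | pD.2 \in powerset (fixpts pD.1)]| = Vnum m.
Proof.
rewrite -sum_exp2_card_fixpts -sum1_card.
rewrite (eq_bigl (fun pD : {perm 'I_m} * {set 'I_m} =>
                    predT pD.1 && (pD.2 \in powerset (fixpts pD.1)))) => [|pD]; last first.
  by rewrite inE.
rewrite -(pair_big_dep predT (fun p D => D \in powerset (fixpts p)) (fun _ _ => 1%N)) /=.
by apply: eq_bigr => p _; rewrite -card_powerset -sum1_card.
Qed.

Local Open Scope ring_scope.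

Definition hits_roots (R : realFieldType) (m : nat) (a : 'I_m -> 'I_m -> R)
    (g : 'I_m -> R) : Prop :=
  forall i, 0 < g i < 1 -> exists2 j, j != i & g j = a i j.

Lemma equilibrium_candidate_productP (R : realFieldType) (m : nat)
    (U : 'I_m -> {ffun 'I_m -> bool} -> R) (v : 'I_m -> bool) (a : 'I_m -> 'I_m -> R) :
  (forall i g, lam U i g = (-1) ^+ v i * \prod_(j < m | j != i) (g j - a i j)) ->
  forall g, equilibrium_candidate U g <-> in_cube g /\ hits_roots a g.
Proof.
move=> lamE g.
have lam0 i : lam U i g = 0 <-> exists2 j, j != i & g j = a i j.
  rewrite lamE; split => [/eqP | [j ji gj]].
    rewrite mulf_eq0 signr_eq0 /= => /prodf_eq0[j ji].
    by rewrite subr_eq0 => /eqP; exists j.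
  apply/eqP; rewrite mulf_eq0 signr_eq0 /=.
  by apply/prodf_eq0; exists j; rewrite ?gj ?subrr.
by split=> -[cube lams]; split=> // i /lams /lam0.
Qed.

Lemma mem_Lset (R : realFieldType) (m : nat) (g : 'I_m -> R) i :
  in_cube g -> (i \in Lset g) = ~~ (0 < g i < 1).
Proof.
move=> /(_ i)/andP[g0 g1]; rewrite inE.
by rewrite !lt_neqAle g0 g1 !andbT negb_and !negbK eq_sym.
Qed.

Section ProductGame.
Variables (R : realFieldType) (m : nat) (a : 'I_m -> 'I_m -> R).
Hypothesis a_open : forall i j, i != j -> 0 < a i j < 1.
Hypothesis a_col_inj : forall i1 i2 j, i1 != i2 -> i1 != j -> i2 != j -> a i1 j != a i2 j.

Definition ec_point (p : {perm 'I_m}) (D : {set 'I_m}) : {ffun 'I_m -> R} :=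
  [ffun j => if p j == j then (j \in D)%:R else a (p j) j].

Lemma ECP p (g : {ffun 'I_m -> R}) :
  EC a p g <-> exists2 D, D \in powerset (fixpts p) & g = ec_point p D.
Proof.
split=> [[cube fixL gE] | [D _ ->]].
  exists [set j in fixpts p | g j == 1].
    by rewrite powersetE; apply/subsetP => j; rewrite inE => /andP[].
  apply/ffunP => j; rewrite ffunE; case: ifP => pj; last by apply: gE; rewrite inE pj.
  have : j \in Lset g by rewrite fixL inE pj.
  by rewrite !inE pj /=; case/orP => /eqP->; rewrite ?eqxx // eq_sym oner_eq0.
split=> [j | | j].
- rewrite ffunE; case: ifP => [_ | /negbT/a_open/andP[a0 a1]]; last by rewrite !ltW.
  by case: (j \in D); rewrite ?lexx ?ler01.
- apply/setP => j; rewrite !inE ffunE; case: ifP => [_ | /negbT/a_open/andP[a0 a1]].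
    by case: (j \in D); rewrite eqxx ?orbT.
  by rewrite gt_eqF // lt_eqF.
- by rewrite inE ffunE => /negbTE->.
Qed.

Lemma ec_point_inj p : {in powerset (fixpts p) &, injective (ec_point p)}.
Proof.
move=> D1 D2; rewrite !powersetE => D1fix D2fix /ffunP eqD; apply/setP => j.
case: (boolP (j \in fixpts p)) => [| jfix]; last first.
  by rewrite (contraNF (subsetP D1fix j)) // (contraNF (subsetP D2fix j)).
rewrite inE => pj; have /eqP := eqD j; rewrite !ffunE pj eqr_nat.
by case: (j \in D1); case: (j \in D2).
Qed.

Lemma EC_perm_unique p1 p2 g : EC a p1 g -> EC a p2 g -> p1 = p2.
Proof.
move=> [_ fixL1 gE1] [_ fixL2 gE2]; apply/permP => j.
have fix12 : fixpts p1 = fixpts p2 by rewrite -fixL1 -fixL2.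
case: (boolP (j \in fixpts p1)) => jfix1.
  have jfix2 : j \in fixpts p2 by rewrite -fix12.
  by rewrite !inE in jfix1 jfix2; rewrite (eqP jfix1) (eqP jfix2).
have jfix2 : j \notin fixpts p2 by rewrite -fix12.
apply/eqP; apply: contraT => p12.
have := a_col_inj (j := j) p12; rewrite !inE in jfix1 jfix2.
by rewrite jfix1 jfix2 -gE1 ?inE // -gE2 ?inE // eqxx => /(_ isT isT).
Qed.

Lemma ec_point_pair_inj :
  {in [set pD : {perm 'I_m} * {set 'I_m} | pD.2 \in powerset (fixpts pD.1)] &,
      injective (fun pD => ec_point pD.1 pD.2)}.
Proof.
move=> [p1 D1] [p2 D2]; rewrite !inE -!powersetE /= => D1fix D2fix eqD.
have EC1 : EC a p1 (ec_point p2 D2) by rewrite -eqD; apply/ECP; exists D1.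
have EC2 : EC a p2 (ec_point p2 D2) by apply/ECP; exists D2.
have p12 := EC_perm_unique EC1 EC2; subst p2.
by rewrite (ec_point_inj D1fix D2fix eqD).
Qed.

Lemma EC_hits_roots p g : EC a p g -> in_cube g /\ hits_roots a g.
Proof.
move=> [cube fixL gE]; split=> // i gi.
have ifix : i \notin fixpts p by rewrite -fixL mem_Lset // negbK.
have pi_i : (p^-1)%g i != i.
  by apply: contra ifix => /eqP pi; rewrite inE -{1}pi permKV.
exists ((p^-1)%g i) => //.
by rewrite gE ?permKV // inE permKV eq_sym.
Qed.

Lemma hits_roots_EC g : in_cube g -> hits_roots a g -> exists p, EC a p g.
Proof.
move=> cube hits; pose N := [set i | 0 < g i < 1].
pose f i := if i \in N then odflt i [pick j | (j != i) && (g j == a i j)] else i.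
have fN i : i \in N -> [/\ f i != i, g (f i) = a i (f i) & f i \in N].
  move=> iN; rewrite /f iN; case: pickP => [j /andP[ji /eqP gj] | none] /=.
    by split=> //; rewrite inE gj a_open // eq_sym.
  by move: iN; rewrite inE => /hits[j ji /eqP gj]; have := none j; rewrite ji gj.
have f_out i : i \notin N -> f i = i by rewrite /f => /negbTE->.
have f_inj : injective f.
  move=> i1 i2; case: (boolP (i1 \in N)) => N1; case: (boolP (i2 \in N)) => N2.
  - move=> f12; have [fi1 g1 _] := fN _ N1; have [fi2 g2 _] := fN _ N2.
    apply/eqP; apply: contraT => i12.
    have ne1 : i1 != f i1 by rewrite eq_sym.
    have ne2 : i2 != f i1 by rewrite f12 eq_sym.
    by move: (a_col_inj i12 ne1 ne2); rewrite -g1 f12 g2 eqxx.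
  - by have [_ _] := fN _ N1; rewrite (f_out _ N2) => + f12; rewrite f12 (negbTE N2).
  - by have [_ _] := fN _ N2; rewrite (f_out _ N1) => + f12; rewrite -f12 (negbTE N1).
  - by rewrite !f_out.
pose p := ((perm f_inj)^-1)%g.
have fpE j : f (p j) = j by rewrite -[f _]permE permKV.
have fix_p j : (p j == j) = (j \notin N).
  rewrite -(inj_eq f_inj) fpE; case: (boolP (j \in N)) => [jN | jN].
    by have [fj _ _] := fN j jN; rewrite eq_sym (negbTE fj).
  by rewrite f_out // eqxx; apply/esym.
exists p; split=> //.
  by apply/setP => j; rewrite mem_Lset // !inE fix_p inE.
move=> j; rewrite inE fix_p negbK => jN.
have pjN : p j \in N.
  by apply: contraT => pjN; have := fix_p j; rewrite -{1}(f_out _ pjN) fpE eqxx jN.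
by have [_ gfpj _] := fN _ pjN; rewrite -{1}(fpE j) gfpj fpE.
Qed.

End ProductGame.

Theorem theorem3p7 (R : realFieldType) (m : nat) (hm : (0 < m)%N)
  (U : 'I_m -> {ffun 'I_m -> bool} -> R) (v : 'I_m -> bool)
  (a : 'I_m -> 'I_m -> R) :
  product_game U v a ->
  [/\ (forall g : {ffun 'I_m -> R},
          equilibrium_candidate U g <-> exists p : {perm 'I_m}, EC a p g),
      (forall (p1 p2 : {perm 'I_m}) (g : {ffun 'I_m -> R}),
          EC a p1 g -> EC a p2 g -> p1 = p2),
      (forall p : {perm 'I_m},
          has_card (fun g : {ffun 'I_m -> R} => EC a p g) (2 ^ #|fixpts p|)%N) &
      has_card (fun g : {ffun 'I_m -> R} => equilibrium_candidate U g) (Vnum m)].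
Proof.
case=> a_open a_col_inj /equilibrium_candidate_productP candP.
have candEC (g : 'I_m -> R) : equilibrium_candidate U g <-> exists p, EC a p g.
  split=> [/candP[cube] | [p /EC_hits_roots/candP //]].
  exact: hits_roots_EC.
split=> [g | p1 p2 g | p |]; first exact: candEC.
- exact: EC_perm_unique.
- rewrite -card_powerset; apply: has_card_image (ec_point_inj (a := a) (p := p)) _ => g.
  exact: ECP a_open p g.
- rewrite -card_subsets_fixpts.
  apply: has_card_image (ec_point_pair_inj a_open a_col_inj) _ => g.
  split=> [/candEC[p /(ECP a_open)[D Dfix ->]] | [[p D]]].
    by exists (p, D); rewrite // inE.
  by rewrite inE => Dfix ->; apply/candEC; exists p; apply/(ECP a_open); exists D.
Qed.
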